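(* Let $G$ be a Hausdorff topological group and $d\ge 1$ an integer. Then $M(G)$ has exactly $d$ points if and only if $G$ has an extremely amenable, open, normal subgroup of index $d$.
   Context: A $G$-flow is a continuous action of $G$ on a compact Hausdorff space; $M(G)$ denotes the universal minimal $G$-flow (the minimal $G$-flow admitting a continuous $G$-equivariant map onto every minimal $G$-flow, unique up to isomorphism). A topological group $H$ is extremely amenable if every $H$-flow has a fixed point. *)

From Stdlib Require Import List Arith Classical.
Import ListNotations.

Record Topology (X : Type) := {
  is_open : (X -> Prop) -> Prop;
  open_all : is_open (fun _ => True);
  open_inter : forall U V, is_open U -> is_open V -> is_open (fun x => U x /\ V x);
  open_union : forall F : (X -> Prop) -> Prop,
      (forall U, F U -> is_open U) -> is_open (fun x => exists U, F U /\ U x)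
}.
Arguments is_open {X} _ _.

Definition is_closed {X : Type} (T : Topology X) (A : X -> Prop) : Prop :=
  is_open T (fun x => ~ A x).

Definition compact {X : Type} (T : Topology X) : Prop :=
  forall F : (X -> Prop) -> Prop,
    (forall U, F U -> is_open T U) ->
    (forall x, exists U, F U /\ U x) ->
    exists l : list (X -> Prop),
      (forall U, In U l -> F U) /\ (forall x, exists U, In U l /\ U x).

Definition hausdorff {X : Type} (T : Topology X) : Prop :=
  forall x y : X, x <> y ->
    exists U V, is_open T U /\ is_open T V /\ U x /\ V y /\
                (forall z, U z -> V z -> False).

Definition continuous {X Y : Type} (TX : Topology X) (TY : Topology Y)
  (f : X -> Y) : Prop :=
  forall W, is_open TY W -> is_open TX (fun x => W (f x)).

(* Hausdorff topological groups. Continuity of multiplication is continuity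
   for the product topology on G x G, written out with basic open boxes. *)
Record TopGroup := {
  tg :> Type;
  mul : tg -> tg -> tg;
  inv : tg -> tg;
  one : tg;
  top : Topology tg;
  mulA : forall x y z, mul x (mul y z) = mul (mul x y) z;
  mul1g : forall x, mul one x = x;
  mulVg : forall x, mul (inv x) x = one;
  mul_cont : forall x y W, is_open top W -> W (mul x y) ->
     exists U V, is_open top U /\ is_open top V /\ U x /\ V y /\
       (forall x' y', U x' -> V y' -> W (mul x' y'));
  inv_cont : continuous top top inv;
  tg_hausdorff : hausdorff top
}.
Arguments mul {_} _ _.
Arguments inv {_} _.
Arguments one {_}.

(* A flow of the subgroup S of G (S = the whole of G for G-flows): a nonempty
   compact Hausdorff space X with a jointly continuous action of S
   (S carrying the subspace topology). The action map is given on all of G but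
   only its restriction to S is constrained. *)
Definition is_flow (G : TopGroup) (S : G -> Prop) (X : Type) (T : Topology X)
  (act : G -> X -> X) : Prop :=
  inhabited X /\ compact T /\ hausdorff T /\
  (forall x, act one x = x) /\
  (forall g h x, S g -> S h -> act (mul g h) x = act g (act h x)) /\
  (forall g x W, S g -> is_open T W -> W (act g x) ->
     exists U V, is_open (top G) U /\ is_open T V /\ U g /\ V x /\
       (forall g' x', S g' -> U g' -> V x' -> W (act g' x'))).

Definition G_flow (G : TopGroup) := is_flow G (fun _ => True).

Definition minimal_flow (G : TopGroup) (X : Type) (T : Topology X)
  (act : G -> X -> X) : Prop :=
  G_flow G X T act /\
  forall A : X -> Prop, is_closed T A -> (exists x, A x) ->
    (forall g x, A x -> A (act g x)) -> forall x, A x.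

Definition universal_minimal_flow (G : TopGroup) (X : Type) (T : Topology X)
  (act : G -> X -> X) : Prop :=
  minimal_flow G X T act /\
  forall (Y : Type) (TY : Topology Y) (actY : G -> Y -> Y),
    minimal_flow G Y TY actY ->
    exists f : X -> Y, continuous T TY f /\
      (forall g x, f (act g x) = actY g (f x)) /\
      (forall y, exists x, f x = y).

Definition has_card (X : Type) (d : nat) : Prop :=
  exists l : list X, NoDup l /\ length l = d /\ forall x, In x l.

Definition UMF_card (G : TopGroup) (d : nat) : Prop :=
  exists (X : Type) (T : Topology X) (act : G -> X -> X),
    universal_minimal_flow G X T act /\ has_card X d.

Definition subgroup (G : TopGroup) (H : G -> Prop) : Prop :=
  H one /\ (forall x y, H x -> H y -> H (mul x y)) /\ (forall x, H x -> H (inv x)).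

Definition normal (G : TopGroup) (H : G -> Prop) : Prop :=
  forall g h, H h -> H (mul (mul g h) (inv g)).

Definition index_eq (G : TopGroup) (H : G -> Prop) (d : nat) : Prop :=
  exists l : list G, length l = d /\
    (forall g, exists r, In r l /\ H (mul (inv r) g)) /\
    (forall i j, i < d -> j < d ->
       H (mul (inv (nth i l one)) (nth j l one)) -> i = j).

Definition extremely_amenable (G : TopGroup) (H : G -> Prop) : Prop :=
  forall (X : Type) (T : Topology X) (act : G -> X -> X),
    is_flow G H X T act -> exists x, forall h, H h -> act h x = x.

(* Forward. A finite Hausdorff flow is discrete, so a finite minimal flow X is
   transitive and the stabilizer H of a point x0 is an open subgroup whose left
   cosets correspond to the d points of X.  If X = M(G), mapping X onto the
   orbit of (x0, x) in X * X shows that H fixes every point, so H is normal.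
   For extreme amenability, an H-flow Y is coinduced to the G-flow Y^(G/H); the
   universal map sends x0 into a minimal subflow (Zorn's lemma) at an H-fixed
   point, whose coordinate at the trivial coset is an H-fixed point of Y.

   Backward. The discrete coset space G/H is a minimal flow; for a minimal flow
   Y, an H-fixed point y0 (extreme amenability) gives the equivariant map
   gH |-> g y0, whose finite, hence closed, invariant image is all of Y. *)

From Stdlib Require Import List Arith Classical ClassicalEpsilon ProofIrrelevance
  FunctionalExtensionality PropExtensionality FinFun Lia.
From mathcomp Require classical_sets.
Import ListNotations.

Section GroupFacts.
Variable G : TopGroup.
Implicit Types a b x y : G.

Lemma mulg_cancel_l a x y : mul a x = mul a y -> x = y.
Proof.
  intro E. rewrite <- (mul1g G x), <- (mul1g G y), <- (mulVg G a), <- !mulA, E.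
  reflexivity.
Qed.

Lemma idempotent_one x : mul x x = x -> x = one.
Proof.
  intro E. rewrite <- (mul1g G x) at 1.
  rewrite <- (mulVg G x), <- mulA, E, mulVg. reflexivity.
Qed.

Lemma mulgV x : mul x (inv x) = one.
Proof.
  apply idempotent_one. rewrite <- mulA, (mulA _ (inv x) x), mulVg, mul1g.
  reflexivity.
Qed.

Lemma mulg1 x : mul x one = x.
Proof. rewrite <- (mulVg G x), mulA, mulgV, mul1g. reflexivity. Qed.

Lemma invK x : inv (inv x) = x.
Proof. apply (mulg_cancel_l (inv x)). rewrite mulgV, mulVg. reflexivity. Qed.

Lemma invM x y : inv (mul x y) = mul (inv y) (inv x).
Proof.
  apply (mulg_cancel_l (mul x y)).
  rewrite mulgV, mulA, <- (mulA _ x y), mulgV, mulg1, mulgV. reflexivity.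
Qed.

Lemma inv1 : inv (one : G) = one.
Proof. rewrite <- (mulg1 (inv one)), mulVg. reflexivity. Qed.

Lemma mulgKV a x b : mul (mul a x) (mul (inv x) b) = mul a b.
Proof. rewrite mulA, <- (mulA _ a x), mulgV, mulg1. reflexivity. Qed.
End GroupFacts.
Arguments mulg_cancel_l {G}. Arguments mulgV {G}. Arguments mulg1 {G}.
Arguments invK {G}. Arguments invM {G}. Arguments inv1 {G}. Arguments mulgKV {G}.

Section SubgroupFacts.
Variables (G : TopGroup) (H : G -> Prop).
Hypothesis subH : subgroup G H.

Lemma subgroup1 : H one.
Proof. apply subH. Qed.

Lemma subgroupM x y : H x -> H y -> H (mul x y).
Proof. apply subH. Qed.

Lemma subgroupV x : H x -> H (inv x).
Proof. apply subH. Qed.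

Lemma subgroup_quot_sym a b : H (mul (inv a) b) -> H (mul (inv b) a).
Proof. intro Hab. apply subgroupV in Hab. rewrite invM, invK in Hab. exact Hab. Qed.

Lemma subgroup_quot_trans a b c :
  H (mul (inv a) b) -> H (mul (inv b) c) -> H (mul (inv a) c).
Proof. intros Hab Hbc. rewrite <- (mulgKV (inv a) b c). exact (subgroupM _ _ Hab Hbc). Qed.
End SubgroupFacts.

Section FlowFacts.
Variables (G : TopGroup) (S : G -> Prop) (X : Type) (T : Topology X) (act : G -> X -> X).
Hypothesis flowX : is_flow G S X T act.

Lemma flow_inhabited : inhabited X.
Proof. apply flowX. Qed.

Lemma flow_compact : compact T.
Proof. apply flowX. Qed.

Lemma flow_hausdorff : hausdorff T.
Proof. apply flowX. Qed.

Lemma flow_act1 x : act one x = x.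
Proof. apply flowX. Qed.

Lemma flow_actM g h x : S g -> S h -> act (mul g h) x = act g (act h x).
Proof. apply flowX. Qed.

Lemma flow_cont g x W : S g -> is_open T W -> W (act g x) ->
  exists U V, is_open (top G) U /\ is_open T V /\ U g /\ V x /\
    (forall g' x', S g' -> U g' -> V x' -> W (act g' x')).
Proof. apply flowX. Qed.
End FlowFacts.

Section GFlowFacts.
Variables (G : TopGroup) (X : Type) (T : Topology X) (act : G -> X -> X).
Hypothesis flowX : G_flow G X T act.

Lemma actM g h x : act (mul g h) x = act g (act h x).
Proof. exact (flow_actM _ _ _ _ _ flowX g h x I I). Qed.

Lemma actK g x : act (inv g) (act g x) = x.
Proof. rewrite <- actM, mulVg. exact (flow_act1 _ _ _ _ _ flowX x). Qed.

Lemma actVK g x : act g (act (inv g) x) = x.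
Proof. rewrite <- actM, mulgV. exact (flow_act1 _ _ _ _ _ flowX x). Qed.

Lemma G_flow_restrict (H : G -> Prop) : is_flow G H X T act.
Proof.
  destruct flowX as [inh [cX [hX [a1 [aM aC]]]]].
  split; [auto|split; [auto|split; [auto|split; [auto|split]]]].
  - intros g h x _ _. apply aM; exact I.
  - intros g x W _ HW HWx. destruct (aC g x W I HW HWx) as [U [V [? [? [? [? HUV]]]]]].
    exists U, V. repeat split; auto.
Qed.
End GFlowFacts.

Lemma open_local {X} (T : Topology X) (P : X -> Prop) :
  (forall x, P x -> exists V, is_open T V /\ V x /\ forall y, V y -> P y) -> is_open T P.
Proof.
  intro HP.
  replace P with (fun x => exists U, (is_open T U /\ forall y, U y -> P y) /\ U x).
  - apply open_union. intros U [HU _]; exact HU.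
  - apply functional_extensionality; intro x; apply propositional_extensionality; split.
    + intros [U [[_ HU] Ux]]. auto.
    + intro Px. destruct (HP x Px) as [V [HV [Vx HVP]]]. exists V; auto.
Qed.

Lemma open_ext {X} (T : Topology X) (P Q : X -> Prop) :
  (forall x, P x <-> Q x) -> is_open T P -> is_open T Q.
Proof.
  intros PQ HP. replace Q with P; auto.
  apply functional_extensionality; intro; apply propositional_extensionality; auto.
Qed.

Lemma open_fin_inter {X} (T : Topology X) (P : nat -> X -> Prop) n :
  (forall j, j < n -> is_open T (P j)) -> is_open T (fun x => forall j, j < n -> P j x).
Proof.
  induction n as [|n IH]; intro HP.
  - eapply open_ext; [|apply open_all]. intro x; split; auto. intros _ j Hj; lia.
  - eapply open_ext; [|apply open_inter; [apply IH; intros j Hj; apply HP; lia|apply (HP n); lia]].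
    intro x. split.
    + intros [H1 H2] j Hj. destruct (Nat.eq_dec j n) as [->|]; auto. apply H1; lia.
    + intro Hx. split; auto.
Qed.

Definition discrete (X : Type) : Topology X.
Proof. refine {| is_open := fun _ => True |}; auto. Defined.

Lemma discrete_hausdorff X : hausdorff (discrete X).
Proof.
  intros x y Hxy. exists (fun z => z = x), (fun z => z = y).
  repeat split; auto. intros z -> ->. auto.
Qed.

Lemma finite_compact {X} (T : Topology X) (l : list X) :
  (forall x, In x l) -> compact T.
Proof.
  intros Hl F _ Fcov.
  assert (Hsub : forall l0 : list X, exists lu, (forall U, In U lu -> F U) /\
                   forall x, In x l0 -> exists U, In U lu /\ U x).
  { induction l0 as [|a l0 [lu [H1 H2]]].
    - exists []. split; [intros U []| intros x []].
    - destruct (Fcov a) as [Ua [FUa Uaa]]. exists (Ua :: lu). split.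
      + intros U [<-|HU]; auto.
      + intros x [<-|Hx]; [exists Ua; split; [left|]; auto|].
        destruct (H2 x Hx) as [U [HU Ux]]. exists U; split; [right|]; auto. }
  destruct (Hsub l) as [lu [H1 H2]]. exists lu. split; auto.
Qed.

Lemma hausdorff_separate_list {X} (T : Topology X) (y : X) (L : list X) :
  hausdorff T -> (forall z, In z L -> z <> y) ->
  exists V, is_open T V /\ V y /\ forall z, In z L -> ~ V z.
Proof.
  intro hT. induction L as [|a L IH]; intro HL.
  - exists (fun _ => True). split; [apply open_all|]. split; auto.
  - destruct IH as [V [HV [Vy HVL]]]. { intros z Hz; apply HL; right; auto. }
    destruct (hT a y) as [U1 [U2 [HU1 [HU2 [U1a [U2y Hd]]]]]]. { apply HL; left; auto. }
    exists (fun x => V x /\ U2 x). split; [apply open_inter; auto|]. split; [auto|].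
    intros z [Ez|Hz] [Vz U2z]; [subst z; exact (Hd a U1a U2z)|exact (HVL z Hz Vz)].
Qed.

Lemma finite_closed {X} (T : Topology X) (L : list X) :
  hausdorff T -> is_closed T (fun y => In y L).
Proof.
  intro hT. apply open_local. intros y Hy.
  destruct (hausdorff_separate_list T y L hT) as [V [HV [Vy HVL]]].
  { intros z Hz ->. contradiction. }
  exists V. split; auto. split; auto. intros z Vz Hz. exact (HVL z Hz Vz).
Qed.

Lemma finite_hausdorff_discrete {X} (T : Topology X) (l : list X) :
  hausdorff T -> (forall x, In x l) -> forall P : X -> Prop, is_open T P.
Proof.
  intros hT Hl P. apply open_local. intros x Px.
  set (others := filter (fun z => if excluded_middle_informative (z = x) then false else true) l).
  assert (Hothers : forall z, In z others <-> z <> x).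
  { intro z. unfold others. rewrite filter_In.
    destruct (excluded_middle_informative (z = x)) as [E|E]; split.
    - intros [_ F]. discriminate.
    - contradiction.
    - auto.
    - intro. split; auto. }
  exists (fun z => ~ In z others). split; [exact (finite_closed T others hT)|split].
  - rewrite Hothers. auto.
  - intros y Hy. apply NNPP. intro nPy. apply Hy, Hothers. intros ->. contradiction.
Qed.

Lemma open_translate_l (G : TopGroup) (a : G) (P : G -> Prop) :
  is_open (top G) P -> is_open (top G) (fun g => P (mul a g)).
Proof.
  intro HP. apply open_local. intros g Hg.
  destruct (mul_cont G a g P HP Hg) as [U [V [_ [HV [Ua [Vg HUV]]]]]].
  exists V. split; auto.
Qed.

Lemma open_translate_r (G : TopGroup) (a : G) (P : G -> Prop) :
  is_open (top G) P -> is_open (top G) (fun g => P (mul g a)).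
Proof.
  intro HP. apply open_local. intros g Hg.
  destruct (mul_cont G g a P HP Hg) as [U [V [HU [_ [Ug [Va HUV]]]]]].
  exists U. split; auto.
Qed.

Lemma sig_eq {A} {P : A -> Prop} (x y : {a | P a}) : proj1_sig x = proj1_sig y -> x = y.
Proof. destruct x, y; simpl; intros ->; f_equal; apply proof_irrelevance. Qed.

Lemma list_choice {A B} (R : A -> B -> Prop) (l : list A) :
  (forall a, In a l -> exists b, R a b) ->
  exists l' : list B, (forall a, In a l -> exists b, In b l' /\ R a b) /\
                      (forall b, In b l' -> exists a, In a l /\ R a b).
Proof.
  induction l as [|a l IH]; intro HR.
  - exists []. split; [intros a []|intros b []].
  - destruct IH as [l' [H1 H2]]. { intros a' Ha'. apply HR. right; auto. }
    destruct (HR a (or_introl eq_refl)) as [b Hb]. exists (b :: l'). split.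
    + intros a' [<-|Ha']; [exists b; split; [left|]; auto|].
      destruct (H1 a' Ha') as [b' [? ?]]. exists b'; split; [right|]; auto.
    + intros b' [<-|Hb']; [exists a; split; [left|]; auto|].
      destruct (H2 b' Hb') as [a' [? ?]]. exists a'; split; [right|]; auto.
Qed.

Lemma fin_choice {A} (a0 : A) (Q : nat -> A -> Prop) n :
  (forall j, j < n -> exists x, Q j x) -> exists f : nat -> A, forall j, j < n -> Q j (f j).
Proof.
  induction n as [|n IH]; intro HQ.
  - exists (fun _ => a0). intros; lia.
  - destruct IH as [f Hf]. { intros j Hj; apply HQ; lia. }
    destruct (HQ n ltac:(lia)) as [x Hx].
    exists (fun j => if Nat.eq_dec j n then x else f j). intros j Hj.
    destruct (Nat.eq_dec j n) as [->|]; auto. apply Hf; lia.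
Qed.

Lemma ord_enum (d : nat) :
  exists l : list {i | i < d}, NoDup l /\ length l = d /\ forall x, In x l.
Proof.
  assert (Hprefix : forall n, n <= d -> exists l : list {i | i < d}, NoDup l /\ length l = n /\
            forall x, proj1_sig x < n <-> In x l).
  { induction n as [|n IH]; intro Hn.
    - exists []. split; [constructor|]. split; auto. intros x; split; [lia|intros []].
    - destruct (IH ltac:(lia)) as [l [Nl [Ll Fl]]].
      assert (Hnd : n < d) by lia.
      exists (exist _ n Hnd :: l). split; [|split].
      + constructor; auto. intro Hin. apply Fl in Hin. simpl in Hin. lia.
      + simpl; auto.
      + intro x. split.
        * intro Hx. destruct (Nat.eq_dec (proj1_sig x) n) as [E|E].
          -- left. apply sig_eq. simpl. auto.
          -- right. apply Fl. lia.
        * intros [<-|Hx]; simpl; [lia|]. apply Fl in Hx. lia. }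
  destruct (Hprefix d (le_n d)) as [l [Nl [Ll Fl]]]. exists l. split; auto. split; auto.
  intro x. apply Fl. apply (proj2_sig x).
Qed.

Lemma sig_enum {A} (P : A -> Prop) (L : list A) :
  (forall a, P a -> In a L) -> exists l : list (sig P), forall o, In o l.
Proof.
  intro HL.
  assert (Hgen : forall L0, exists l : list (sig P), forall o, In (proj1_sig o) L0 -> In o l).
  { induction L0 as [|a L0 [l Hl]].
    - exists []. intros o [].
    - destruct (classic (P a)) as [Pa|nPa].
      + exists (exist _ a Pa :: l). intros o [E|Ho]; [left; apply sig_eq; auto|right; auto].
      + exists l. intros o [E|Ho]; auto. exfalso. apply nPa. rewrite E. apply (proj2_sig o). }
  destruct (Hgen L) as [l Hl]. exists l. intro o. apply Hl, HL, (proj2_sig o).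
Qed.

Lemma open_list_inter {X A} (T : Topology X) (P : A -> X -> Prop) (l : list A) :
  (forall a, In a l -> is_open T (P a)) -> is_open T (fun x => forall a, In a l -> P a x).
Proof.
  induction l as [|a l IH]; intro HP.
  - eapply open_ext; [|apply open_all]. intro x. split; [intros _ a []|auto].
  - eapply open_ext; [|apply open_inter; [apply (HP a (or_introl eq_refl))|
                                          apply IH; intros; apply HP; right; auto]].
    intro x. split.
    + intros [Ha Hl] a' [<-|Ha']; auto.
    + intro Hx. split; [apply Hx; left; auto|intros a' Ha'; apply Hx; right; auto].
Qed.

Lemma image_compact {A B} (TA : Topology A) (TB : Topology B) (f : A -> B) :
  compact TA -> continuous TA TB f -> (forall b, exists a, f a = b) -> compact TB.
Proof.
  intros cA cf sf F HF Fcov.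
  destruct (cA (fun U => exists V, F V /\ U = (fun a => V (f a)))) as [lu [Hlu Hc]].
  - intros U [V [FV ->]]. apply cf. auto.
  - intro a. destruct (Fcov (f a)) as [V [FV Vfa]]. exists (fun a => V (f a)). eauto.
  - destruct (list_choice (fun U V => F V /\ U = (fun a => V (f a))) lu Hlu) as [lv [H1 H2]].
    exists lv. split.
    + intros V HV. destruct (H2 V HV) as [U [_ [FV _]]]. exact FV.
    + intro b. destruct (sf b) as [a <-]. destruct (Hc a) as [U [HU Ua]].
      destruct (H1 U HU) as [V [HV [_ ->]]]. eauto.
Qed.

Definition prodT {A B} (TA : Topology A) (TB : Topology B) : Topology (A * B).
Proof.
  refine {| is_open := fun W => forall p, W p -> exists U V, is_open TA U /\ is_open TB V /\
             U (fst p) /\ V (snd p) /\ forall a b, U a -> V b -> W (a, b) |}.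
  - intros p _. exists (fun _ => True), (fun _ => True). repeat split; try apply open_all.
  - intros W1 W2 H1 H2 p [W1p W2p].
    destruct (H1 p W1p) as [U1 [V1 [? [? [? [? HW1]]]]]].
    destruct (H2 p W2p) as [U2 [V2 [? [? [? [? HW2]]]]]].
    exists (fun a => U1 a /\ U2 a), (fun b => V1 b /\ V2 b).
    repeat split; try apply open_inter; auto; [apply HW1|apply HW2]; tauto.
  - intros F HF p [W [FW Wp]].
    destruct (HF W FW p Wp) as [U [V [? [? [? [? HW]]]]]].
    exists U, V. repeat split; auto. intros a b Ua Vb. exists W. split; auto.
Defined.

Section ProductCompact.
Variables (A B : Type) (TA : Topology A) (TB : Topology B).
Hypotheses (cA : compact TA) (cB : compact TB).
Variable F : (A * B -> Prop) -> Prop.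
Hypotheses (HF : forall U, F U -> is_open (prodT TA TB) U) (Fcov : forall p, exists U, F U /\ U p).

Definition tube_covered (W : A -> Prop) : Prop :=
  exists lu, (forall U, In U lu -> F U) /\ forall a b, W a -> exists U, In U lu /\ U (a, b).

Lemma tube_lemma a : exists W, is_open TA W /\ W a /\ tube_covered W.
Proof.
  set (good := fun (V : B -> Prop) (p : (A -> Prop) * (A * B -> Prop)) =>
         is_open TA (fst p) /\ fst p a /\ F (snd p) /\
         forall a' b, fst p a' -> V b -> snd p (a', b)).
  destruct (cB (fun V => is_open TB V /\ exists p, good V p)) as [lv [Hlv Hcv]].
  - intros V [HV _]; exact HV.
  - intro b. destruct (Fcov (a, b)) as [U [FU Uab]].
    destruct (HF U FU (a, b) Uab) as [Ua [Vb [HUa [HVb [Uaa [Vbb HUV]]]]]].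
    exists Vb. split; [split; [auto|exists (Ua, U); repeat split; auto]|auto].
  - destruct (list_choice good lv (fun V HV => proj2 (Hlv V HV))) as [lp [H1 H2]].
    exists (fun a' => forall p, In p lp -> fst p a'). split; [|split].
    + apply open_list_inter. intros p Hp. destruct (H2 p Hp) as [V [_ [Hp' _]]]. exact Hp'.
    + intros p Hp. destruct (H2 p Hp) as [V [_ [_ [Hpa _]]]]. exact Hpa.
    + exists (map snd lp). split.
      * intros U HU. apply in_map_iff in HU. destruct HU as [p [<- Hp]].
        destruct (H2 p Hp) as [V [_ [_ [_ [FU _]]]]]. exact FU.
      * intros a' b Wa'. destruct (Hcv b) as [V [HV Vb]].
        destruct (H1 V HV) as [p [Hp [_ [_ [_ Hsub]]]]].
        exists (snd p). split; [apply in_map; auto|apply Hsub; auto].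
Qed.

Lemma prod_finite_subcover :
  exists l, (forall U, In U l -> F U) /\ forall p, exists U, In U l /\ U p.
Proof.
  destruct (cA (fun W => is_open TA W /\ tube_covered W)) as [lw [Hlw Hcw]].
  - intros W [HW _]; exact HW.
  - intro a. destruct (tube_lemma a) as [W [HW [Wa Hc]]]. exists W. auto.
  - destruct (list_choice (fun W lu => (forall U, In U lu -> F U) /\
                 forall a b, W a -> exists U, In U lu /\ U (a, b)) lw
                 (fun W HW => proj2 (Hlw W HW))) as [ll [H1 H2]].
    exists (concat ll). split.
    + intros U HU. apply in_concat in HU. destruct HU as [lu [Hlu HU]].
      destruct (H2 lu Hlu) as [W [_ [FU _]]]. auto.
    + intros [a b]. destruct (Hcw a) as [W [HW Wa]].
      destruct (H1 W HW) as [lu [Hlu [_ Hc]]]. destruct (Hc a b Wa) as [U [HU Uab]].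
      exists U. split; auto. apply in_concat. eauto.
Qed.
End ProductCompact.

Lemma prod_compact {A B} (TA : Topology A) (TB : Topology B) :
  compact TA -> compact TB -> compact (prodT TA TB).
Proof. intros cA cB F HF Fcov. exact (prod_finite_subcover A B TA TB cA cB F HF Fcov). Qed.

(* The finite power [Y^n], encoded as sequences that are constantly [y0] from
   index n on, with the product topology generated by open boxes. *)
Section FinitePower.
Variables (Y : Type) (TY : Topology Y) (y0 : Y).

Definition pow (n : nat) := {z : nat -> Y | forall j, n <= j -> z j = y0}.

Definition powT (n : nat) : Topology (pow n).
Proof.
  refine {| is_open := fun W => forall z, W z -> exists V : nat -> Y -> Prop,
      (forall j, j < n -> is_open TY (V j) /\ V j (proj1_sig z j)) /\
      forall z', (forall j, j < n -> V j (proj1_sig z' j)) -> W z' |}.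
  - intros z _. exists (fun _ _ => True). split; auto. intros j _. split; auto. apply open_all.
  - intros W1 W2 H1 H2 z [W1z W2z].
    destruct (H1 z W1z) as [V1 [HV1 HW1]]. destruct (H2 z W2z) as [V2 [HV2 HW2]].
    exists (fun j y => V1 j y /\ V2 j y). split.
    + intros j Hj. destruct (HV1 j Hj), (HV2 j Hj). split; auto. apply open_inter; auto.
    + intros z' Hz'. split; [apply HW1|apply HW2]; intros j Hj; apply Hz'; auto.
  - intros F HF z [W [FW Wz]]. destruct (HF W FW z Wz) as [V [HV HW]].
    exists V. split; auto. intros z' Hz'. exists W. auto.
Defined.

Lemma box_open n (V : nat -> Y -> Prop) : (forall j, j < n -> is_open TY (V j)) ->
  is_open (powT n) (fun z => forall j, j < n -> V j (proj1_sig z j)).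
Proof. intros HV z Hz. exists V. split; [intros j Hj; split; auto|auto]. Qed.

(* [Y^(n+1)] is the image of [Y^n * Y] under appending a last coordinate. *)
Definition snoc_fun (n : nat) (z : nat -> Y) (y : Y) : nat -> Y :=
  fun j => if Nat.eq_dec j n then y else z j.

Lemma snoc_ok n (p : pow n * Y) :
  forall j, S n <= j -> snoc_fun n (proj1_sig (fst p)) (snd p) j = y0.
Proof.
  intros j Hj. unfold snoc_fun. destruct (Nat.eq_dec j n); [lia|]. apply (proj2_sig (fst p)). lia.
Qed.

Definition snoc n (p : pow n * Y) : pow (S n) := exist _ _ (snoc_ok n p).

Lemma snoc_continuous n : continuous (prodT (powT n) TY) (powT (S n)) (snoc n).
Proof.
  intros W HW [z y] Wzy. destruct (HW _ Wzy) as [V [HV HWV]].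
  exists (fun z' : pow n => forall j, j < n -> V j (proj1_sig z' j)), (V n).
  split; [apply box_open; intros j Hj; apply HV; lia|].
  split; [apply HV; lia|]. split; [|split].
  - intros j Hj. destruct (HV j ltac:(lia)) as [_ Hv]. simpl in Hv.
    unfold snoc_fun in Hv. destruct (Nat.eq_dec j n); [lia|auto].
  - simpl. destruct (HV n ltac:(lia)) as [_ Hv]. simpl in Hv.
    unfold snoc_fun in Hv. destruct (Nat.eq_dec n n); [auto|lia].
  - intros a b Ha Vb. apply HWV. intros j Hj. simpl. unfold snoc_fun.
    destruct (Nat.eq_dec j n) as [->|Hne]; auto. apply Ha. lia.
Qed.

Lemma snoc_surjective n (w : pow (S n)) : exists p, snoc n p = w.
Proof.
  assert (Hz : forall j, n <= j ->
            (fun j => if Nat.eq_dec j n then y0 else proj1_sig w j) j = y0).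
  { intros j Hj. destruct (Nat.eq_dec j n); auto. apply (proj2_sig w). lia. }
  exists (exist _ _ Hz, proj1_sig w n). apply sig_eq. simpl.
  apply functional_extensionality. intro j. unfold snoc_fun.
  destruct (Nat.eq_dec j n) as [->|]; auto.
Qed.

Lemma pow_compact : compact TY -> forall n, compact (powT n).
Proof.
  intros cY n. induction n as [|n IH].
  - assert (Hz : forall j, 0 <= j -> (fun _ : nat => y0) j = y0) by auto.
    apply (finite_compact _ [exist _ _ Hz]). intro z. left. apply sig_eq. simpl.
    apply functional_extensionality. intro j. symmetry. apply (proj2_sig z). lia.
  - apply (image_compact (prodT (powT n) TY) _ (snoc n)); [apply prod_compact; auto|
                                        apply snoc_continuous|apply snoc_surjective].
Qed.

Lemma pow_hausdorff : hausdorff TY -> forall n, hausdorff (powT n).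
Proof.
  intros hY n z z' Hne.
  assert (Hj : exists j, j < n /\ proj1_sig z j <> proj1_sig z' j).
  { apply NNPP. intro Hc. apply Hne. apply sig_eq. apply functional_extensionality. intro j.
    destruct (le_lt_dec n j).
    - rewrite (proj2_sig z j), (proj2_sig z' j); auto.
    - apply NNPP. intro Hd. apply Hc. exists j; auto. }
  destruct Hj as [j [Hj Hd]].
  destruct (hY _ _ Hd) as [U1 [U2 [HU1 [HU2 [U1z [U2z Hdis]]]]]].
  set (at_j := fun (U : Y -> Prop) k => if Nat.eq_dec k j then U else (fun _ : Y => True)).
  assert (Hopen : forall U, is_open TY U -> forall k, k < n -> is_open TY (at_j U k)).
  { intros U HU k _. unfold at_j. destruct (Nat.eq_dec k j); auto. apply open_all. }
  exists (fun w : pow n => forall k, k < n -> at_j U1 k (proj1_sig w k)),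
         (fun w : pow n => forall k, k < n -> at_j U2 k (proj1_sig w k)).
  split; [apply box_open, Hopen; auto|]. split; [apply box_open, Hopen; auto|].
  split; [intros k _; unfold at_j; destruct (Nat.eq_dec k j) as [->|]; auto|].
  split; [intros k _; unfold at_j; destruct (Nat.eq_dec k j) as [->|]; auto|].
  intros w H1 H2. specialize (H1 j Hj). specialize (H2 j Hj). unfold at_j in H1, H2.
  destruct (Nat.eq_dec j j); [exact (Hdis _ H1 H2)|lia].
Qed.
End FinitePower.

Definition subT {Z} (TZ : Topology Z) (C : Z -> Prop) : Topology {z | C z}.
Proof.
  refine {| is_open := fun U => exists V, is_open TZ V /\ forall m, U m <-> V (proj1_sig m) |}.
  - exists (fun _ => True). split; [apply open_all|]. tauto.
  - intros U1 U2 [V1 [HV1 E1]] [V2 [HV2 E2]]. exists (fun z => V1 z /\ V2 z).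
    split; [apply open_inter; auto|]. intro m. rewrite E1, E2. tauto.
  - intros F HF.
    exists (fun z => exists V, (is_open TZ V /\ exists U, F U /\
                                 forall m, U m <-> V (proj1_sig m)) /\ V z).
    split; [apply open_union; intros V [HV _]; exact HV|]. intro m. split.
    + intros [U [FU Um]]. destruct (HF U FU) as [V [HV E]].
      exists V. split; [split; [auto|exists U; auto]|apply E; auto].
    + intros [V [[HV [U [FU E]]] Vm]]. exists U. split; auto. apply E; auto.
Defined.

Lemma closed_subspace_compact {Z} (TZ : Topology Z) (C : Z -> Prop) :
  compact TZ -> is_closed TZ C -> compact (subT TZ C).
Proof.
  intros cZ hC F HF Fcov.
  destruct (classic (exists m : {z | C z}, True)) as [[m0 _]|Hempty].
  2: { exists []. split; [intros U []|intro m; exfalso; apply Hempty; exists m; auto]. }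
  destruct (Fcov m0) as [U0 [FU0 _]].
  set (cover := fun V => is_open TZ V /\
          (V = (fun z => ~ C z) \/ exists U, F U /\ forall m, U m <-> V (proj1_sig m))).
  destruct (cZ cover) as [lv [Hlv Hcv]].
  - intros V [HV _]; exact HV.
  - intro z. destruct (classic (C z)) as [Cz|nCz].
    + destruct (Fcov (exist _ z Cz)) as [U [FU Uz]]. destruct (HF U FU) as [V [HV E]].
      exists V. split; [split; [auto|right; exists U; auto]|exact (proj1 (E _) Uz)].
    + exists (fun z => ~ C z). split; [split; [exact hC|left; auto]|exact nCz].
  - destruct (list_choice (fun V U => F U /\ forall m, V (proj1_sig m) -> U m) lv) as [lu [H1 H2]].
    + intros V HV. destruct (Hlv V HV) as [_ [->|[U [FU E]]]].
      * exists U0. split; auto. intros m Hm. exfalso. exact (Hm (proj2_sig m)).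
      * exists U. split; auto. intro m. apply E.
    + exists lu. split.
      * intros U HU. destruct (H2 U HU) as [V [_ [FU _]]]. exact FU.
      * intro m. destruct (Hcv (proj1_sig m)) as [V [HV Vm]].
        destruct (H1 V HV) as [U [HU [_ HVU]]]. eauto.
Qed.

Lemma subspace_hausdorff {Z} (TZ : Topology Z) (C : Z -> Prop) :
  hausdorff TZ -> hausdorff (subT TZ C).
Proof.
  intros hZ m m' Hne.
  assert (Hne' : proj1_sig m <> proj1_sig m') by (intro E; apply Hne, sig_eq; auto).
  destruct (hZ _ _ Hne') as [U1 [U2 [HU1 [HU2 [U1m [U2m Hd]]]]]].
  exists (fun w => U1 (proj1_sig w)), (fun w => U2 (proj1_sig w)).
  split; [exists U1; split; [auto|tauto]|]. split; [exists U2; split; [auto|tauto]|].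
  split; [auto|split; [auto|]]. intros w; apply Hd.
Qed.

Lemma zorn_union_chains (T : Type) (P : (T -> Prop) -> Prop) :
  (forall F : (T -> Prop) -> Prop, (forall X, F X -> P X) ->
     (forall X Y, F X -> F Y -> (forall z, X z -> Y z) \/ (forall z, Y z -> X z)) ->
     P (fun z => exists X, F X /\ X z)) ->
  exists A, P A /\ forall B, (forall z, A z -> B z) -> P B -> forall z, B z -> A z.
Proof.
  intro Hchain.
  destruct (@classical_sets.Zorn_bigcup T P) as [A [PA Amax]].
  - intros F FP Ftot.
    replace (classical_sets.bigcup F (fun X => X)) with (fun z => exists X, F X /\ X z).
    + apply Hchain; [exact FP|]. intros X Y FX FY. destruct (Ftot X Y FX FY); [left|right]; auto.
    + apply functional_extensionality. intro z. apply propositional_extensionality. split.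
      * intros [X [FX Xz]]. exists X; auto.
      * intros [X FX Xz]. exists X; auto.
  - exists A. split; auto. intros B AB PB z Bz.
    apply NNPP. intro nAz. apply (Amax B); [split; [exact AB|]|exact PB].
    intro BA. apply nAz. apply BA; auto.
Qed.

Lemma chain_list_upper_bound {T} (F : (T -> Prop) -> Prop) (lu : list (T -> Prop)) :
  (forall X Y, F X -> F Y -> (forall z, X z -> Y z) \/ (forall z, Y z -> X z)) ->
  (forall U, In U lu -> F U) -> lu <> [] ->
  exists M, F M /\ forall U, In U lu -> forall z, U z -> M z.
Proof.
  intro Ftot. induction lu as [|U lu IH]; intros Hl Hne; [now destruct Hne|].
  destruct lu as [|U' lu].
  - exists U. split; [apply Hl; left; auto|]. intros U' [<-|[]]. auto.
  - destruct IH as [M [FM HM]]; [intros V HV; apply Hl; right; auto|discriminate|].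
    destruct (Ftot U M (Hl U (or_introl eq_refl)) FM) as [HUM|HMU].
    + exists M. split; [exact FM|]. intros V [<-|HV]; [exact HUM|exact (HM V HV)].
    + exists U. split; [apply Hl; left; auto|].
      intros V [<-|HV] z Hz; [exact Hz|]. apply HMU. exact (HM V HV z Hz).
Qed.

Lemma open_union2 {X} (T : Topology X) (U V : X -> Prop) :
  is_open T U -> is_open T V -> is_open T (fun x => U x \/ V x).
Proof.
  intros HU HV. apply open_local. intros x [Ux|Vx]; [exists U|exists V]; split; auto.
Qed.

(* Every G-flow contains a minimal subflow: the complement of a maximal proper
   invariant open set (Zorn's lemma, using compactness for chains). *)
Section MinimalSubflow.
Variables (G : TopGroup) (Z : Type) (TZ : Topology Z) (actZ : G -> Z -> Z).
Hypothesis flowZ : G_flow G Z TZ actZ.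

Definition proper_invariant_open (U : Z -> Prop) : Prop :=
  is_open TZ U /\ (forall g z, ~ U z -> ~ U (actZ g z)) /\ exists z, ~ U z.

Lemma chain_union_proper_invariant_open (F : (Z -> Prop) -> Prop) :
  (forall U, F U -> proper_invariant_open U) ->
  (forall X Y, F X -> F Y -> (forall z, X z -> Y z) \/ (forall z, Y z -> X z)) ->
  proper_invariant_open (fun z => exists U, F U /\ U z).
Proof.
  intros FP Ftot. split; [|split].
  - apply open_union. intros U FU. apply (FP U FU).
  - intros g z Hz [U [FU Ugz]]. apply Hz. exists U. split; auto.
    apply NNPP. intro nUz. exact (proj1 (proj2 (FP U FU)) g z nUz Ugz).
  - apply NNPP. intro Hall.
    assert (Hcov : forall z, exists U, F U /\ U z).
    { intro z. apply NNPP. intro Hn. apply Hall. exists z. auto. }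
    destruct (flow_compact _ _ _ _ _ flowZ F (fun U FU => proj1 (FP U FU)) Hcov)
      as [lu [Hlu Hc]].
    destruct (flow_inhabited _ _ _ _ _ flowZ) as [z0].
    destruct (chain_list_upper_bound F lu Ftot Hlu) as [M [FM HM]].
    { intros ->. destruct (Hc z0) as [U [[] _]]. }
    destruct (proj2 (proj2 (FP M FM))) as [z Hz]. apply Hz.
    destruct (Hc z) as [U [HU Uz]]. exact (HM U HU z Uz).
Qed.

Section FromMaximal.
Variable A : Z -> Prop.
Hypotheses (PA : proper_invariant_open A)
  (Amax : forall B, (forall z, A z -> B z) -> proper_invariant_open B -> forall z, B z -> A z).

Definition minset (z : Z) : Prop := ~ A z.

Lemma minset_invariant g z : minset z -> minset (actZ g z).
Proof. apply PA. Qed.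

Lemma minset_closed : is_closed TZ minset.
Proof. eapply open_ext; [|apply PA]. intro z. unfold minset. split; [auto|apply NNPP]. Qed.

Lemma minset_minimal (V : Z -> Prop) : is_open TZ V ->
  (forall g z, minset z -> ~ V z -> ~ V (actZ g z)) -> (exists z, minset z /\ ~ V z) ->
  forall z, minset z -> ~ V z.
Proof.
  intros HV Vinv [z0 [Cz0 nVz0]] z Cz Vz. apply Cz.
  apply (Amax (fun z => A z \/ V z)); [auto| |right; exact Vz].
  split; [apply open_union2; [apply PA|exact HV]|split].
  - intros g w Hw [Agw|Vgw].
    + exact (minset_invariant g w (fun Aw => Hw (or_introl Aw)) Agw).
    + exact (Vinv g w (fun Aw => Hw (or_introl Aw)) (fun Vw => Hw (or_intror Vw)) Vgw).
  - exists z0. intros [Az0|Vz0]; auto.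
Qed.

Definition minact (g : G) (m : {z | minset z}) : {z | minset z} :=
  exist _ (actZ g (proj1_sig m)) (minset_invariant g _ (proj2_sig m)).

Lemma minact_minimal : minimal_flow G {z | minset z} (subT TZ minset) minact.
Proof.
  split; [split; [|split; [|split; [|split; [|split]]]]|].
  - destruct PA as [_ [_ [z nAz]]]. exact (inhabits (exist _ z nAz)).
  - apply closed_subspace_compact; [exact (flow_compact _ _ _ _ _ flowZ)|exact minset_closed].
  - apply subspace_hausdorff. exact (flow_hausdorff _ _ _ _ _ flowZ).
  - intro m. apply sig_eq. exact (flow_act1 _ _ _ _ _ flowZ _).
  - intros g h m _ _. apply sig_eq. exact (actM _ _ _ _ flowZ _ _ _).
  - intros g m W _ [VW [HVW EW]] HWm. apply EW in HWm.
    destruct (flow_cont _ _ _ _ _ flowZ g (proj1_sig m) VW I HVW HWm)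
      as [U [V [HU [HV [Ug [Vm HUV]]]]]].
    exists U, (fun w => V (proj1_sig w)). split; [auto|].
    split; [exists V; split; [auto|tauto]|]. split; [auto|split; [auto|]].
    intros g' m' _ Ug' Vm'. apply EW. apply HUV; auto.
  - intros B [V [HV EV]] [m0 Bm0] Binv m. apply NNPP. intro nBm.
    apply (minset_minimal V HV) with (z := proj1_sig m); [| |exact (proj2_sig m)|now apply EV].
    + intros g w Cw nVw Vgw.
      assert (Bw : B (exist _ w Cw)) by (apply NNPP; intro nB; exact (nVw (proj1 (EV (exist _ w Cw)) nB))).
      exact (proj2 (EV (minact g (exist _ w Cw))) Vgw (Binv g _ Bw)).
    + exists (proj1_sig m0). split; [exact (proj2_sig m0)|]. intro Vm0. exact (proj2 (EV m0) Vm0 Bm0).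
Qed.
End FromMaximal.

Lemma minimal_subflow : exists (C : Z -> Prop) (actC : G -> {z | C z} -> {z | C z}),
  minimal_flow G {z | C z} (subT TZ C) actC /\
  forall g m, proj1_sig (actC g m) = actZ g (proj1_sig m).
Proof.
  destruct (zorn_union_chains Z proper_invariant_open chain_union_proper_invariant_open)
    as [A [PA Amax]].
  exists (minset A), (minact A PA). split; [exact (minact_minimal A PA Amax)|reflexivity].
Qed.
End MinimalSubflow.

Lemma discrete_transitive_minimal (G : TopGroup) (X : Type) (act : G -> X -> X) (l : list X) :
  (forall x, In x l) -> inhabited X ->
  (forall x, act one x = x) -> (forall g h x, act (mul g h) x = act g (act h x)) ->
  (forall g x, exists U, is_open (top G) U /\ U g /\ forall g', U g' -> act g' x = act g x) ->
  (forall x y, exists g, act g x = y) ->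
  minimal_flow G X (discrete X) act.
Proof.
  intros Hl inh a1 aM aloc atrans.
  split; [split; [exact inh|split; [|split; [|split; [exact a1|split]]]]|].
  - exact (finite_compact _ l Hl).
  - apply discrete_hausdorff.
  - intros g h x _ _. apply aM.
  - intros g x W _ _ HW. destruct (aloc g x) as [U [HU [Ug HUx]]].
    exists U, (fun x' => x' = x). repeat split; auto.
    intros g' x' _ Ug' ->. rewrite (HUx g' Ug'). exact HW.
  - intros A _ [x0 Ax0] Ainv x. destruct (atrans x0 x) as [g <-]. auto.
Qed.

Section FiniteMinimalFlow.
Variables (G : TopGroup) (X : Type) (T : Topology X) (act : G -> X -> X) (lX : list X).
Hypotheses (minX : minimal_flow G X T act) (fullX : forall x, In x lX).

Let flowX : G_flow G X T act := proj1 minX.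

Lemma finite_flow_discrete (P : X -> Prop) : is_open T P.
Proof. exact (finite_hausdorff_discrete T lX (flow_hausdorff _ _ _ _ _ flowX) fullX P). Qed.

Lemma act_locally_constant g x :
  exists U, is_open (top G) U /\ U g /\ forall g', U g' -> act g' x = act g x.
Proof.
  destruct (flow_cont _ _ _ _ _ flowX g x (fun z => z = act g x) I
              (finite_flow_discrete _) eq_refl) as [U [V [HU [_ [Ug [Vx HUV]]]]]].
  exists U. split; [auto|split; [auto|]]. intros g' Ug'. exact (HUV g' x I Ug' Vx).
Qed.

(* The orbit of any point is a closed (as every set is) invariant set, hence everything. *)
Lemma finite_minimal_transitive x0 x : exists a, act a x0 = x.
Proof.
  apply (proj2 minX (fun x => exists a, act a x0 = x)).
  - apply finite_flow_discrete.
  - exists x0, one. exact (flow_act1 _ _ _ _ _ flowX x0).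
  - intros g y [a <-]. exists (mul g a). apply (actM _ _ _ _ flowX).
Qed.

Variable x0 : X.

Definition stab (g : G) : Prop := act g x0 = x0.

Lemma stab_subgroup : subgroup G stab.
Proof.
  unfold stab. split; [exact (flow_act1 _ _ _ _ _ flowX x0)|split].
  - intros x y Hx Hy. rewrite (actM _ _ _ _ flowX), Hy, Hx. reflexivity.
  - intros x Hx. rewrite <- Hx at 1. apply (actK _ _ _ _ flowX).
Qed.

Lemma stab_open : is_open (top G) stab.
Proof.
  apply open_local. intros g Hg. destruct (act_locally_constant g x0) as [U [HU [Ug HUg]]].
  exists U. split; [auto|split; [auto|]]. intros g' Ug'. unfold stab. rewrite HUg; auto.
Qed.

Lemma stab_index d : NoDup lX -> length lX = d -> index_eq G stab d.
Proof.
  intros NX LX.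
  assert (Hreps : forall L : list X, exists l : list G, length l = length L /\
            forall i, i < length L -> act (nth i l one) x0 = nth i L x0).
  { induction L as [|a L [l [Hl Hn]]].
    - exists []. split; auto. intros i Hi. simpl in Hi. lia.
    - destruct (finite_minimal_transitive x0 a) as [b Hb].
      exists (b :: l). split; [simpl; auto|]. intros [|i] Hi; simpl; auto.
      apply Hn. simpl in Hi. lia. }
  destruct (Hreps lX) as [l [Hl Hn]]. exists l. split; [lia|split].
  - intro g. destruct (In_nth lX (act g x0) x0 (fullX _)) as [i [Hi Ei]].
    exists (nth i l one). split; [apply nth_In; lia|].
    unfold stab. rewrite (actM _ _ _ _ flowX), <- Ei, <- Hn by auto. apply (actK _ _ _ _ flowX).
  - intros i j Hi Hj Hij. unfold stab in Hij.
    apply (proj1 (NoDup_nth lX x0) NX); try lia.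
    rewrite <- !Hn by lia. rewrite (actM _ _ _ _ flowX) in Hij.
    rewrite <- Hij at 1. apply (actVK _ _ _ _ flowX).
Qed.

(* If [stab] fixes y, then every element fixing y lies in [stab]: the map
   [a x0 |-> a y] is a well-defined surjection of the finite set X onto itself,
   hence injective. *)
Lemma stab_fixer_sub y :
  (forall h, stab h -> act h y = y) -> forall h, act h y = y -> stab h.
Proof.
  intros Hy h Hh.
  set (rep := fun z => proj1_sig (constructive_indefinite_description _
                                   (finite_minimal_transitive x0 z))).
  assert (Hrep : forall z, act (rep z) x0 = z).
  { intro z. unfold rep. destruct constructive_indefinite_description; auto. }
  set (phi := fun z => act (rep z) y).
  assert (Hphi : forall a, phi (act a x0) = act a y).
  { intro a. unfold phi. set (b := rep (act a x0)).
    assert (Hb : stab (mul (inv a) b)).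
    { unfold stab. rewrite (actM _ _ _ _ flowX). unfold b. rewrite Hrep.
      apply (actK _ _ _ _ flowX). }
    replace b with (mul a (mul (inv a) b)) by (rewrite mulA, mulgV, mul1g; reflexivity).
    rewrite (actM _ _ _ _ flowX), Hy; auto. }
  assert (Hsurj : Surjective phi).
  { intro z. destruct (finite_minimal_transitive x0 y) as [k Hk].
    destruct (finite_minimal_transitive x0 z) as [c Hc].
    exists (act (mul c (inv k)) x0).
    rewrite Hphi, <- Hk, <- (actM _ _ _ _ flowX), <- mulA, mulVg, mulg1. auto. }
  apply Endo_Injective_Surjective in Hsurj; [|exists lX; exact fullX|intros u v; apply classic].
  apply Hsurj. pose proof (Hphi one) as E1. rewrite !(flow_act1 _ _ _ _ _ flowX) in E1.
  rewrite E1, Hphi. exact Hh.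
Qed.
End FiniteMinimalFlow.

Section FiniteUniversalFlow.
Variables (G : TopGroup) (X : Type) (T : Topology X) (act : G -> X -> X) (lX : list X) (x0 : X).
Hypotheses (umfX : universal_minimal_flow G X T act) (fullX : forall x, In x lX).

Let minX : minimal_flow G X T act := proj1 umfX.
Let flowX : G_flow G X T act := proj1 minX.

Section PairOrbit.
Variable x : X.

Definition pair_orbit := {p : X * X | exists a, p = (act a x0, act a x)}.

Lemma pair_act_ok (g : G) (p : pair_orbit) :
  exists a, (act g (fst (proj1_sig p)), act g (snd (proj1_sig p))) = (act a x0, act a x).
Proof.
  destruct p as [p [a ->]]. exists (mul g a). simpl. rewrite !(actM _ _ _ _ flowX). reflexivity.
Qed.

Definition pair_act (g : G) (p : pair_orbit) : pair_orbit := exist _ _ (pair_act_ok g p).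

Lemma pair_orbit_minimal : minimal_flow G pair_orbit (discrete pair_orbit) pair_act.
Proof.
  destruct (sig_enum (fun p : X * X => exists a, p = (act a x0, act a x)) (list_prod lX lX))
    as [lO HlO]; [intros [p q] _; apply in_prod; auto|].
  apply (discrete_transitive_minimal G _ pair_act lO HlO).
  - refine (inhabits (exist _ (x0, x) _)). exists one.
    rewrite !(flow_act1 _ _ _ _ _ flowX). reflexivity.
  - intros [p [a ->]]. apply sig_eq. simpl. rewrite !(flow_act1 _ _ _ _ _ flowX). reflexivity.
  - intros g h p. apply sig_eq. simpl. rewrite !(actM _ _ _ _ flowX). reflexivity.
  - intros g [[p q] Hpq].
    destruct (act_locally_constant G X T act lX minX fullX g p) as [U1 [HU1 [U1g E1]]].
    destruct (act_locally_constant G X T act lX minX fullX g q) as [U2 [HU2 [U2g E2]]].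
    exists (fun g' => U1 g' /\ U2 g'). split; [apply open_inter; auto|split; [auto|]].
    intros g' [U1g' U2g']. apply sig_eq. simpl. rewrite E1, E2; auto.
  - intros [p [a ->]] [q [b ->]]. exists (mul b (inv a)). apply sig_eq. simpl.
    rewrite <- !(actM _ _ _ _ flowX), <- mulA, mulVg, mulg1. reflexivity.
Qed.
End PairOrbit.

(* The equivariant map [X -> pair_orbit x] sends x0 to some [(k x0, k x)] fixed by
   [stab]; then [stab] is the stabilizer of [k x0], so [k h k^-1] fixes [k x]. *)
Lemma stab_acts_trivially x h : stab G X act x0 h -> act h x = x.
Proof.
  intro Hh.
  destruct (proj2 umfX _ _ _ (pair_orbit_minimal x)) as [f [_ [Hf _]]].
  destruct (f x0) as [[y1 y2] [k Ek]] eqn:Ef. injection Ek as E1 E2.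
  assert (Hfix : forall h', stab G X act x0 h' -> act h' y1 = y1 /\ act h' y2 = y2).
  { intros h' Hh'. pose proof (Hf h' x0) as E. unfold stab in Hh'. rewrite Hh', Ef in E.
    apply (f_equal (@proj1_sig _ _)) in E. simpl in E. injection E as F1 F2. auto. }
  assert (Hconj : stab G X act x0 (mul (mul k h) (inv k))).
  { apply (stab_fixer_sub G X T act lX minX fullX x0 y1); [intros; apply Hfix; auto|].
    rewrite E1, !(actM _ _ _ _ flowX), (actK _ _ _ _ flowX). unfold stab in Hh. rewrite Hh.
    reflexivity. }
  destruct (Hfix _ Hconj) as [_ F2].
  rewrite E2, !(actM _ _ _ _ flowX), (actK _ _ _ _ flowX) in F2.
  apply (f_equal (act (inv k))) in F2. rewrite !(actK _ _ _ _ flowX) in F2. exact F2.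
Qed.

Lemma stab_normal : normal G (stab G X act x0).
Proof.
  intros g h Hh. unfold stab.
  rewrite !(actM _ _ _ _ flowX), (stab_acts_trivially _ h Hh). apply (actVK _ _ _ _ flowX).
Qed.
End FiniteUniversalFlow.

Section FiniteIndex.
Variables (G : TopGroup) (H : G -> Prop) (d : nat) (l : list G).
Hypotheses (subH : subgroup G H) (lenl : length l = d)
  (covl : forall g, exists r, In r l /\ H (mul (inv r) g))
  (disl : forall i j, i < d -> j < d -> H (mul (inv (nth i l one)) (nth j l one)) -> i = j).

Definition rep (i : nat) : G := nth i l one.

Lemma coset_index_exists a : exists k, k < d /\ H (mul (inv (rep k)) a).
Proof.
  destruct (covl a) as [r [Hr Ha]]. destruct (In_nth l r one Hr) as [k [Hk Ek]].
  exists k. unfold rep. rewrite Ek. split; [lia|auto].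
Qed.

Lemma coset_index_unique a i j : i < d -> j < d ->
  H (mul (inv (rep i)) a) -> H (mul (inv (rep j)) a) -> i = j.
Proof.
  intros Hi Hj Hia Hja. apply disl; auto.
  exact (subgroup_quot_trans G H subH _ a _ Hia (subgroup_quot_sym G H subH _ _ Hja)).
Qed.

Definition coset_index (a : G) : nat :=
  proj1_sig (constructive_indefinite_description _ (coset_index_exists a)).

Lemma coset_index_lt a : coset_index a < d.
Proof. unfold coset_index. destruct constructive_indefinite_description as [k [? ?]]; auto. Qed.

Lemma coset_index_rep_quot a : H (mul (inv (rep (coset_index a))) a).
Proof. unfold coset_index. destruct constructive_indefinite_description as [k [? ?]]; auto. Qed.

Lemma coset_index_eq a k : k < d -> H (mul (inv (rep k)) a) -> coset_index a = k.
Proof.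
  intros Hk Ha. apply (coset_index_unique a); auto; [apply coset_index_lt|apply coset_index_rep_quot].
Qed.

Lemma coset_index_rep i : i < d -> coset_index (rep i) = i.
Proof. intro Hi. apply coset_index_eq; auto. rewrite mulVg. apply (subgroup1 G H subH). Qed.

Lemma coset_index_mul g a : coset_index (mul g (rep (coset_index a))) = coset_index (mul g a).
Proof.
  symmetry. apply coset_index_eq; [apply coset_index_lt|].
  apply (subgroup_quot_trans G H subH _ (mul g (rep (coset_index a)))).
  - apply coset_index_rep_quot.
  - rewrite invM, <- mulA, (mulA _ (inv g) g a), mulVg, mul1g.
    apply coset_index_rep_quot.
Qed.

Hypotheses (normH : normal G H) (openH : is_open (top G) H).

Lemma normal_conj_inv a h : H h -> H (mul (mul (inv a) h) a).
Proof. intro Hh. pose proof (normH (inv a) h Hh) as E. rewrite invK in E. exact E. Qed.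

Lemma coset_index_near g g' a : H (mul (inv g) g') -> coset_index (mul g' a) = coset_index (mul g a).
Proof.
  intro Hgg'. apply coset_index_eq; [apply coset_index_lt|].
  apply (subgroup_quot_trans G H subH _ (mul g a)); [apply coset_index_rep_quot|].
  rewrite invM, <- mulA, (mulA _ (inv g) g' a), mulA. now apply normal_conj_inv.
Qed.

Definition coset_space := {i | i < d}.

Definition coset_act (g : G) (x : coset_space) : coset_space :=
  exist _ (coset_index (mul g (rep (proj1_sig x)))) (coset_index_lt _).

Lemma coset_space_minimal : 1 <= d -> minimal_flow G coset_space (discrete _) coset_act.
Proof.
  intro hd. destruct (ord_enum d) as [lc [_ [_ fullc]]].
  apply (discrete_transitive_minimal G _ coset_act lc fullc).
  - exact (inhabits (exist _ 0 hd)).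
  - intros [i Hi]. apply sig_eq. simpl. rewrite mul1g. now apply coset_index_rep.
  - intros g h x. apply sig_eq. simpl. rewrite coset_index_mul, mulA. reflexivity.
  - intros g x. exists (fun g' => H (mul (inv g) g')). split; [now apply open_translate_l|split].
    + rewrite mulVg. apply (subgroup1 G H subH).
    + intros g' Hg'. apply sig_eq. simpl. now apply coset_index_near.
  - intros [i Hi] [j Hj]. exists (mul (rep j) (inv (rep i))). apply sig_eq. simpl.
    rewrite <- mulA, mulVg, mulg1. now apply coset_index_rep.
Qed.

Lemma fixed_point_orbit_map (Y : Type) (actY : G -> Y -> Y) (y0 : Y) :
  (forall g h y, actY (mul g h) y = actY g (actY h y)) -> (forall h, H h -> actY h y0 = y0) ->
  forall a b, H (mul (inv a) b) -> actY a y0 = actY b y0.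
Proof.
  intros aM fix0 a b Hab. symmetry.
  replace b with (mul a (mul (inv a) b)) by (rewrite mulA, mulgV, mul1g; reflexivity).
  rewrite aM, fix0; auto.
Qed.

Lemma coset_space_universal : 1 <= d -> extremely_amenable G H ->
  universal_minimal_flow G coset_space (discrete _) coset_act.
Proof.
  intros hd eaH. split; [now apply coset_space_minimal|].
  intros Y TY actY minY.
  pose proof (proj1 minY) as flowY.
  destruct (eaH Y TY actY (G_flow_restrict _ _ _ _ flowY H)) as [y0 fix0].
  set (f := fun x : coset_space => actY (rep (proj1_sig x)) y0).
  assert (equivf : forall g x, f (coset_act g x) = actY g (f x)).
  { intros g x. unfold f. simpl. rewrite <- (actM _ _ _ _ flowY).
    apply (fixed_point_orbit_map Y actY y0 (actM _ _ _ _ flowY) fix0).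
    apply coset_index_rep_quot. }
  exists f. split; [intros W _; exact I|split; [exact equivf|]].
  destruct (ord_enum d) as [lc [_ [_ fullc]]].
  intro y. apply (proj2 minY (fun y => exists x, f x = y)).
  - pose proof (finite_closed TY (map f lc) (flow_hausdorff _ _ _ _ _ flowY)) as Hcl.
    eapply open_ext; [|exact Hcl]. intro z. simpl. rewrite in_map_iff. split.
    + intros Hz [x <-]. apply Hz. exists x. auto.
    + intros Hz [x [<- _]]. apply Hz. exists x. reflexivity.
  - exists (f (exist _ 0 hd)), (exist _ 0 hd). reflexivity.
  - intros g z [x <-]. exists (coset_act g x). apply equivf.
Qed.

(* The G-flow coinduced from an H-flow Y: the finite power [Y^d], one coordinate
   per coset, with [(g z)_j = cocycle g j . z_(coset_shift g j)]. *)
Section InducedFlow.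
Variables (Y : Type) (TY : Topology Y) (actY : G -> Y -> Y) (y0 : Y).
Hypothesis flowY : is_flow G H Y TY actY.

Definition coset_shift (g : G) (j : nat) : nat := coset_index (mul (inv g) (rep j)).

Definition cocycle (g : G) (j : nat) : G := mul (mul (inv (rep j)) g) (rep (coset_shift g j)).

Lemma cocycle_in_H g j : H (cocycle g j).
Proof.
  pose proof (subgroup_quot_sym G H subH _ _ (coset_index_rep_quot (mul (inv g) (rep j)))) as E.
  rewrite invM, invK in E. exact E.
Qed.

Lemma coset_shift_one j : j < d -> coset_shift one j = j.
Proof. intro Hj. unfold coset_shift. rewrite inv1, mul1g. now apply coset_index_rep. Qed.

Lemma coset_shift_mul g h j : coset_shift h (coset_shift g j) = coset_shift (mul g h) j.
Proof. unfold coset_shift. rewrite coset_index_mul, invM, mulA. reflexivity. Qed.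

Lemma cocycle_mul g h j : cocycle (mul g h) j = mul (cocycle g j) (cocycle h (coset_shift g j)).
Proof.
  unfold cocycle. rewrite <- coset_shift_mul, <- (mulA _ (inv (rep (coset_shift g j)))), mulgKV.
  rewrite !mulA. reflexivity.
Qed.

Lemma coset_shift_near g g' j : H (mul (inv g) g') -> coset_shift g' j = coset_shift g j.
Proof.
  intro Hgg'. apply coset_index_near.
  pose proof (normH g _ (subgroupV G H subH _ Hgg')) as E.
  rewrite invM, invK, (mulA _ g), <- mulA, mulgV, mulg1 in E. rewrite invK. exact E.
Qed.

Definition induced := pow Y y0 d.
Definition inducedT := powT Y TY y0 d.

Definition induced_fun (g : G) (z : induced) : nat -> Y :=
  fun j => if lt_dec j d then actY (cocycle g j) (proj1_sig z (coset_shift g j)) else y0.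

Lemma induced_fun_ok g z : forall j, d <= j -> induced_fun g z j = y0.
Proof. intros j Hj. unfold induced_fun. destruct (lt_dec j d); [lia|auto]. Qed.

Definition induced_act (g : G) (z : induced) : induced := exist _ _ (induced_fun_ok g z).

Lemma induced_act_cont g z W : is_open inducedT W -> W (induced_act g z) ->
  exists U V, is_open (top G) U /\ is_open inducedT V /\ U g /\ V z /\
    (forall g' z', True -> U g' -> V z' -> W (induced_act g' z')).
Proof.
  intros HW HWz. destruct (HW _ HWz) as [V [HV HWV]].
  set (good := fun (j : nat) (p : (G -> Prop) * (Y -> Prop)) =>
         is_open (top G) (fst p) /\ is_open TY (snd p) /\
         fst p (cocycle g j) /\ snd p (proj1_sig z (coset_shift g j)) /\
         forall g' y', H g' -> fst p g' -> snd p y' -> V j (actY g' y')).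
  destruct (fin_choice (fun _ => True, fun _ => True) good d) as [nb Hnb].
  { intros j Hj. destruct (HV j Hj) as [HVj Vj]. simpl in Vj. unfold induced_fun in Vj.
    destruct (lt_dec j d) as [_|]; [|lia].
    destruct (flow_cont _ _ _ _ _ flowY (cocycle g j) _ (V j) (cocycle_in_H g j) HVj Vj)
      as [U [E [HU [HE [Ug [Ez HUE]]]]]].
    exists (U, E). repeat split; auto. }
  exists (fun g' => H (mul (inv g) g') /\
            forall j, j < d -> fst (nb j) (mul (mul (inv (rep j)) g') (rep (coset_shift g j)))),
         (fun z' : induced => forall k, k < d ->
            (fun k y => forall j, j < d -> coset_shift g j = k -> snd (nb j) y) k (proj1_sig z' k)).
  split; [|split; [|split; [|split]]].
  - apply open_inter; [now apply open_translate_l|]. apply open_fin_inter. intros j Hj.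
    apply (open_translate_l G (inv (rep j)) (fun y => fst (nb j) (mul y (rep (coset_shift g j))))).
    apply (open_translate_r G _ (fst (nb j))). apply (Hnb j Hj).
  - apply (box_open Y TY y0 d (fun k y => forall j, j < d -> coset_shift g j = k -> snd (nb j) y)).
    intros k Hk. apply open_fin_inter. intros j Hj.
    destruct (classic (coset_shift g j = k)) as [E|E].
    + eapply open_ext; [|apply (Hnb j Hj)]. intro y. simpl. split; auto.
    + eapply open_ext; [|apply open_all]. intro y. split; auto. intros _ E'. contradiction.
  - split; [rewrite mulVg; apply (subgroup1 G H subH)|]. intros j Hj. apply (Hnb j Hj).
  - intros k Hk j Hj <-. apply (Hnb j Hj).
  - intros g' z' _ [Hg' HU] HVz. apply HWV. intros j Hj. simpl. unfold induced_fun.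
    destruct (lt_dec j d) as [_|]; [|lia].
    rewrite (coset_shift_near g g' j Hg').
    apply (Hnb j Hj); [apply cocycle_in_H| |].
    + unfold cocycle. rewrite (coset_shift_near g g' j Hg'). now apply HU.
    + exact (HVz (coset_shift g j) (coset_index_lt _) j Hj eq_refl).
Qed.

Lemma induced_flow : G_flow G induced inducedT induced_act.
Proof.
  assert (Hz0 : forall j, d <= j -> (fun _ : nat => y0) j = y0) by auto.
  split; [|split; [|split; [|split; [|split]]]].
  - exact (inhabits (exist _ _ Hz0)).
  - apply pow_compact. exact (flow_compact _ _ _ _ _ flowY).
  - apply pow_hausdorff. exact (flow_hausdorff _ _ _ _ _ flowY).
  - intro z. apply sig_eq, functional_extensionality. intro j. simpl. unfold induced_fun.
    destruct (lt_dec j d) as [Hj|Hj].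
    + unfold cocycle. rewrite coset_shift_one, mulg1, mulVg, (flow_act1 _ _ _ _ _ flowY); auto.
    + symmetry. apply (proj2_sig z). lia.
  - intros g h z _ _. apply sig_eq, functional_extensionality. intro j. simpl.
    unfold induced_fun at 1 2. destruct (lt_dec j d) as [Hj|Hj]; auto.
    rewrite cocycle_mul, (flow_actM _ _ _ _ _ flowY) by apply cocycle_in_H. simpl.
    unfold induced_fun. destruct (lt_dec (coset_shift g j) d) as [_|Hn].
    + rewrite coset_shift_mul. reflexivity.
    + exfalso. apply Hn, coset_index_lt.
  - intros g z W _. apply induced_act_cont.
Qed.

(* An H-fixed point of the induced flow yields an H-fixed point of Y: its
   coordinate at the coset H itself. *)
Lemma induced_fixed_point (m : induced) :
  (forall h, H h -> induced_act h m = m) -> exists y, forall h, H h -> actY h y = y.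
Proof.
  intro fixm. set (j0 := coset_index one).
  assert (Hr0 : H (rep j0)).
  { pose proof (subgroupV G H subH _ (coset_index_rep_quot one)) as E.
    rewrite mulg1, invK in E. exact E. }
  exists (proj1_sig m j0). intros h' Hh'.
  set (h := mul (mul (rep j0) h') (inv (rep j0))).
  assert (Hh : H h) by (apply normH; exact Hh').
  assert (Eshift : coset_shift h j0 = j0).
  { apply coset_index_eq; [apply coset_index_lt|].
    apply (subgroupM G H subH); [now apply (subgroupV G H subH)|].
    apply (subgroupM G H subH); [now apply (subgroupV G H subH)|exact Hr0]. }
  assert (Ecoc : cocycle h j0 = h').
  { unfold cocycle. rewrite Eshift. unfold h.
    rewrite !mulA, mulVg, mul1g, <- mulA, mulVg, mulg1. reflexivity. }
  pose proof (f_equal (fun z : induced => proj1_sig z j0) (fixm h Hh)) as E.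
  simpl in E. unfold induced_fun in E. destruct (lt_dec j0 d) as [_|Hn].
  - rewrite Eshift, Ecoc in E. exact E.
  - exfalso. apply Hn, coset_index_lt.
Qed.
End InducedFlow.

(* If H fixes a point of a universal minimal flow, then H is extremely amenable:
   the image of that point in a minimal subflow of an induced flow is H-fixed. *)
Lemma extremely_amenable_of_universal (X : Type) (TX : Topology X) (actX : G -> X -> X) (x0 : X) :
  universal_minimal_flow G X TX actX -> (forall h, H h -> actX h x0 = x0) ->
  extremely_amenable G H.
Proof.
  intros umfX fix0 Y TY actY flowY. destruct (flow_inhabited _ _ _ _ _ flowY) as [y0].
  destruct (minimal_subflow G _ _ _ (induced_flow Y TY actY y0 flowY))
    as [C [actC [minC embC]]].
  destruct (proj2 umfX _ _ _ minC) as [f [_ [equivf _]]].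
  apply (induced_fixed_point Y actY y0 (proj1_sig (f x0))).
  intros h Hh. rewrite <- embC, <- equivf, fix0; auto.
Qed.
End FiniteIndex.

Theorem mainTheorem7 (G : TopGroup) (d : nat) (hd : 1 <= d) :
  UMF_card G d <->
  exists H : G -> Prop,
    subgroup G H /\ is_open (top G) H /\ normal G H /\
    index_eq G H d /\ extremely_amenable G H.
Proof.
  split.
  - (* H is the stabilizer of a point of M(G). *)
    intros [X [T [act [umfX [lX [NX [LX fullX]]]]]]].
    pose proof (proj1 umfX) as minX.
    destruct (flow_inhabited _ _ _ _ _ (proj1 minX)) as [x0].
    pose proof (stab_subgroup G X T act minX x0) as subH.
    pose proof (stab_open G X T act lX minX fullX x0) as openH.
    pose proof (stab_normal G X T act lX x0 umfX fullX) as normH.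
    pose proof (stab_index G X T act lX minX fullX x0 d NX LX) as indexH.
    exists (stab G X act x0). do 4 (split; [assumption|]).
    destruct indexH as [l [lenl [covl disl]]].
    exact (extremely_amenable_of_universal G _ d l subH lenl covl disl normH openH
             X T act x0 umfX (fun h Hh => Hh)).
  - (* M(G) is the coset space G/H. *)
    intros [H [subH [openH [normH [[l [lenl [covl disl]]] eaH]]]]].
    destruct (ord_enum d) as [lc [Nc [Lc fullc]]].
    exists (coset_space d), (discrete _), (coset_act G H d l lenl covl).
    split; [exact (coset_space_universal G H d l subH lenl covl disl normH openH hd eaH)|].
    exists lc. auto.
Qed.
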